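(* Let $\mathcal{A}$ be a unital algebra over a field $F$ with $\operatorname{char}(F)\neq 2$. Then: (a) if $Z_J(\mathcal{A})=Z(\mathcal{A})$, then $\operatorname{JCent}(\mathcal{A})=\operatorname{Cent}(\mathcal{A})$; (b) if $Z_Q(\mathcal{A})=Z(\mathcal{A})$, then $\operatorname{QJCent}(\mathcal{A})=\operatorname{Cent}(\mathcal{A})$; (c) if $Z_Q(\mathcal{A})=Z_J(\mathcal{A})$, then $\operatorname{QJCent}(\mathcal{A})=\operatorname{JCent}(\mathcal{A})$.
   Context: $x\circ y=xy+yx$, $[x,y]=xy-yx$. $Z(\mathcal{A})$ is the center. $Z_J(\mathcal{A})=\{a: [[a,x],y]=0\ \forall x,y\in\mathcal{A}\}$, $Z_Q(\mathcal{A})=\{a: [a,[x,y]]=0\ \forall x,y\in\mathcal{A}\}$. $\operatorname{Cent}(\mathcal{A})$: linear $f:\mathcal{A}\to\mathcal{A}$ with $f(xy)=f(x)y=xf(y)$ for all $x,y$. $\operatorname{JCent}(\mathcal{A})$: linear $f$ with $f(x\circ y)=f(x)\circ y$ for all $x,y$. $\operatorname{QJCent}(\mathcal{A})$: linear $f$ with $f(x)\circ y=x\circ f(y)$ for all $x,y$. *)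

From mathcomp Require Import all_boot all_algebra.
Set Implicit Arguments. Unset Strict Implicit. Unset Printing Implicit Defensive.
Import GRing.Theory.
Local Open Scope ring_scope.

Definition jprod (R : pzRingType) (x y : R) : R := x * y + y * x.
Definition comm (R : pzRingType) (x y : R) : R := x * y - y * x.

Definition in_center (R : pzRingType) (a : R) : Prop := forall x : R, comm a x = 0.
Definition in_ZJ (R : pzRingType) (a : R) : Prop :=
  forall x y : R, comm (comm a x) y = 0.
Definition in_ZQ (R : pzRingType) (a : R) : Prop :=
  forall x y : R, comm a (comm x y) = 0.

Definition is_cent (F : fieldType) (A : algType F) (f : A -> A) : Prop :=
  linear f /\ forall x y : A, f (x * y) = f x * y /\ f (x * y) = x * f y.
Definition is_jcent (F : fieldType) (A : algType F) (f : A -> A) : Prop :=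
  linear f /\ forall x y : A, f (jprod x y) = jprod (f x) y.
Definition is_qjcent (F : fieldType) (A : algType F) (f : A -> A) : Prop :=
  linear f /\ forall x y : A, jprod (f x) y = jprod x (f y).

(* Each of the three kinds of centroid maps f of a unital algebra is determined
   by c = f 1: putting y = 1 in the defining identity gives 2 f(x) = c ∘ x.
   Conversely, for a linear f with 2 f(x) = c ∘ x, the identities
     c ∘ (x ∘ y) - (c ∘ x) ∘ y = [[c, y], x],
     (c ∘ x) ∘ y - x ∘ (c ∘ y) = [c, [x, y]]
   show that f is a Jordan centroid iff c is in Z_J and a quasi-Jordan centroid
   iff c is in Z_Q, while f is a centroid iff c is central.  As char F <> 2,
   2 f(x) determines f(x), so each class of maps is described by its own
   center, and equal centers give equal classes. *)

From mathcomp Require Import all_boot all_algebra.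

Set Implicit Arguments.
Unset Strict Implicit.
Unset Printing Implicit Defensive.

Import GRing.Theory.
Local Open Scope ring_scope.

Section JordanIdentities.

Variable R : pzRingType.
Implicit Types c x y : R.

Lemma jprodC x y : jprod x y = jprod y x.
Proof. exact: addrC. Qed.

Lemma jprod1r x : jprod 1 x = x *+ 2.
Proof. by rewrite /jprod mul1r mulr1 mulr2n. Qed.

Lemma jprodMn2l x y : jprod (x *+ 2) y = jprod x y *+ 2.
Proof. by rewrite /jprod mulrnAl mulrnAr mulrnDl. Qed.

Lemma jprodMn2r x y : jprod x (y *+ 2) = jprod x y *+ 2.
Proof. by rewrite jprodC jprodMn2l jprodC. Qed.

Lemma jprodA_comm c x y :
  jprod c (jprod x y) - jprod (jprod c x) y = comm (comm c y) x.
Proof.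
(* Expand, then reorder the eight monomials so that the two cancelling pairs
   are adjacent and the rest is the expansion of the right-hand side. *)
rewrite /jprod /comm !mulrDr !mulrDl !mulrN !mulNr !mulrA !opprD ?opprK !addrA.
by rewrite [LHS](ACl (((1*5)*(4*8))*(((2*7)*6)*3)))%AC /= !subrr !add0r.
Qed.

Lemma jprodCA_comm c x y :
  jprod (jprod c x) y - jprod x (jprod c y) = comm c (comm x y).
Proof.
rewrite /jprod /comm !mulrDr !mulrDl !mulrN !mulNr !mulrA !opprD ?opprK !addrA.
by rewrite [LHS](ACl (((2*5)*(3*8))*(((1*7)*6)*4)))%AC /= !subrr !add0r.
Qed.

Lemma centerC c x : in_center c -> x * c = c * x.
Proof. by move=> cc; apply/esym/subr0_eq/cc. Qed.

Lemma jprod_center c x : in_center c -> jprod c x = (c * x) *+ 2.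
Proof. by move=> cc; rewrite /jprod (centerC x cc) mulr2n. Qed.

End JordanIdentities.

Section Centroids.

Variables (F : fieldType) (A : algType F).
Hypothesis hF : (2 \notin [pchar F])%N.
Implicit Types (c x y : A) (f : A -> A).

Lemma mulr2nI : injective (fun x : A => x *+ 2).
Proof.
move=> x y /= e2; have two_neq0 : (2%:R : F) != 0.
  by apply: contra hF => two_eq0; rewrite inE /= two_eq0.
by rewrite -(scalerK two_neq0 x) scaler_nat e2 -scaler_nat scalerK.
Qed.

Lemma linear_add f : linear f -> {morph f : x y / x + y}.
Proof. by move=> f_lin x y; have := f_lin 1 x y; rewrite !scale1r. Qed.

Definition half_jmul_in (P : A -> Prop) f : Prop :=
  [/\ linear f, P (f 1) & forall x, f x *+ 2 = jprod (f 1) x].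

Lemma jcentP f : is_jcent f <-> half_jmul_in (@in_ZJ A) f.
Proof.
split=> [[f_lin fJ] | [f_lin ZJf1 f2]].
  have f2 x : f x *+ 2 = jprod (f 1) x.
    by rewrite -fJ jprod1r mulr2n linear_add // -mulr2n.
  split=> // y x; rewrite -jprodA_comm -!f2 (jprodMn2l (f x)) fJ.
  exact: subrr.
split=> // x y; apply: mulr2nI => /=.
rewrite -jprodMn2l f2 (f2 x); apply/eqP.
by rewrite -subr_eq0 jprodA_comm ZJf1.
Qed.

Lemma qjcentP f : is_qjcent f <-> half_jmul_in (@in_ZQ A) f.
Proof.
split=> [[f_lin fQ] | [f_lin ZQf1 f2]].
  have f2 x : f x *+ 2 = jprod (f 1) x.
    by rewrite -jprod1r jprodC fQ jprodC.
  split=> // x y; rewrite -jprodCA_comm -!f2 jprodMn2l jprodMn2r fQ.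
  exact: subrr.
split=> // x y; apply: mulr2nI => /=.
rewrite -jprodMn2l -jprodMn2r !f2; apply/eqP.
by rewrite -subr_eq0 jprodCA_comm ZQf1.
Qed.

Lemma centP f : is_cent f <-> half_jmul_in (@in_center A) f.
Proof.
split=> [[f_lin fC] | [f_lin Zf1 f2]].
  have fl x : f x = f 1 * x by rewrite -(fC 1 x).1 mul1r.
  have fr x : f x = x * f 1 by rewrite -(fC x 1).2 mulr1.
  have Zf1 : in_center (f 1) by move=> x; rewrite /comm -fl -fr subrr.
  by split=> // x; rewrite (jprod_center x Zf1) -fl.
have fl x : f x = f 1 * x.
  by apply: mulr2nI; rewrite /= f2 (jprod_center x Zf1).
split=> // x y; rewrite (fl (x * y)) (fl x) mulrA; split=> //.
by rewrite (fl y) mulrA (centerC x Zf1).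
Qed.

Lemma half_jmul_in_transfer (P Q : A -> Prop) (K L : (A -> A) -> Prop) :
  (forall c, P c <-> Q c) ->
  (forall f, K f <-> half_jmul_in P f) -> (forall f, L f <-> half_jmul_in Q f) ->
  forall f, K f <-> L f.
Proof.
move=> PQ KP LQ f; apply: iff_trans (KP f) (iff_sym (iff_trans (LQ f) _)).
by split=> -[f_lin /PQ Pf1 f2].
Qed.

End Centroids.

Theorem corollary3p2 (F : fieldType) (A : algType F) (hF : (2 \notin [pchar F])%N) :
  ((forall a : A, in_ZJ a <-> in_center a) ->
     forall f : A -> A, is_jcent f <-> is_cent f) /\
  ((forall a : A, in_ZQ a <-> in_center a) ->
     forall f : A -> A, is_qjcent f <-> is_cent f) /\
  ((forall a : A, in_ZQ a <-> in_ZJ a) ->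
     forall f : A -> A, is_qjcent f <-> is_jcent f).
Proof.
split; [|split] => centers_eq; apply: (half_jmul_in_transfer centers_eq).
- exact: jcentP.
- exact: centP.
- exact: qjcentP.
- exact: centP.
- exact: qjcentP.
- exact: jcentP.
Qed.
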